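(* Let $(\mathcal{C},\tau)$ be a braided $\mathcal{E}$-module. Then for all $e,e'\in\mathcal{E}$ and $x\in\mathcal{C}$: (1) $(r_{e,e'}\odot 1_x)\circ\tau_{e,\,e'\odot x}=(1_{e'}\odot\tau_{e,x})\circ(r_{e,e'}\odot 1_x)$ as morphisms $e\odot e'\odot x\to e'\odot e\odot x$; (2) $\tau_{e\otimes e',x}=\tau_{e,\,e'\odot x}\circ(1_e\odot\tau_{e',x})$ as morphisms $e\odot e'\odot x\to e\odot e'\odot x$.
   Context: Let $\Bbbk$ be an algebraically closed field of characteristic zero and $\mathcal{E}$ a symmetric fusion category over $\Bbbk$ with symmetric braiding $r_{e,e'}:e\otimes e'\to e'\otimes e$ and unit $\mathbf{1}_{\mathcal{E}}$. A finite semisimple $\mathcal{E}$-module $\mathcal{C}$ here is a finite semisimple $\Bbbk$-linear abelian category with a $\Bbbk$-bilinear left action $e\odot x$ and a right action $x\odot e$ of $\mathcal{E}$, with coherent associativity and unit isomorphisms; all associativity isomorphisms (such as $(e\otimes e')\odot x\cong e\odot(e'\odot x)$) are suppressed, and ''$1$'' denotes an identity morphism. An $\mathcal{E}$-module braiding on $\mathcal{C}$ is a natural isomorphism $\tau_{e,x}=\tau^2_{x,e}\circ\tau^1_{e,x}:e\odot x\to e\odot x$, given by natural isomorphisms $\tau^1_{e,x}:e\odot x\to x\odot e$ and $\tau^2_{x,e}:x\odot e\to e\odot x$, such that $\tau_{\mathbf{1}_{\mathcal{E}},x}=\mathrm{id}$ and for all $e,e'\in\mathcal{E}$, $x\in\mathcal{C}$: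 (a) $\tau^1_{e,\,e'\odot x}=(1_{e'}\odot\tau^1_{e,x})\circ(r_{e,e'}\odot 1_x)$; (b) $\tau^2_{e'\odot x,\,e}=(r_{e',e}\odot 1_x)\circ(1_{e'}\odot\tau^2_{x,e})$; (c) $\tau^1_{e\otimes e',x}=(\tau^1_{e,x}\odot 1_{e'})\circ(1_e\odot\tau^1_{e',x})$; (d) $\tau^2_{x,e\otimes e'}=(1_e\odot\tau^2_{x,e'})\circ(\tau^2_{x,e}\odot 1_{e'})$. A braided $\mathcal{E}$-module is a finite semisimple $\mathcal{E}$-module equipped with an $\mathcal{E}$-module braiding. *)

Set Implicit Arguments.
Unset Strict Implicit.
Set Universe Polymorphism.

Record Cat := {
  ob :> Type;
  hom : ob -> ob -> Type;
  idm : forall a, hom a a;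
  comp : forall a b c, hom b c -> hom a b -> hom a c;
  comp_id_l : forall a b (f : hom a b), comp (idm b) f = f;
  comp_id_r : forall a b (f : hom a b), comp f (idm a) = f;
  comp_assoc : forall a b c d (f : hom a b) (g : hom b c) (h : hom c d),
      comp h (comp g f) = comp (comp h g) f }.

Arguments hom {_} _ _.
Arguments idm {_} _.
Arguments comp {_ _ _ _} _ _.

Notation "g ∘ f" := (comp g f) (at level 40, left associativity).

Record SymMonCat := {
  smc :> Cat;
  tens : smc -> smc -> smc;
  tensm : forall a b c d, hom a b -> hom c d -> hom (tens a c) (tens b d);
  tensm_id : forall a c, tensm (idm a) (idm c) = idm (tens a c);
  tensm_comp : forall a b b' c d d' (f : hom a b) (g : hom b b')
      (f' : hom c d) (g' : hom d d'),
      tensm (g ∘ f) (g' ∘ f') = tensm g g' ∘ tensm f f';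
  unitE : smc;
  asc : forall a b c, hom (tens (tens a b) c) (tens a (tens b c));
  asc_inv : forall a b c, hom (tens a (tens b c)) (tens (tens a b) c);
  asc_iso1 : forall a b c, asc_inv a b c ∘ asc a b c = idm _;
  asc_iso2 : forall a b c, asc a b c ∘ asc_inv a b c = idm _;
  asc_nat : forall a a' b b' c c' (f : hom a a') (g : hom b b') (h : hom c c'),
      asc a' b' c' ∘ tensm (tensm f g) h = tensm f (tensm g h) ∘ asc a b c;
  lun : forall a, hom (tens unitE a) a;
  lun_inv : forall a, hom a (tens unitE a);
  lun_iso1 : forall a, lun_inv a ∘ lun a = idm _;
  lun_iso2 : forall a, lun a ∘ lun_inv a = idm _;
  lun_nat : forall a b (f : hom a b), lun b ∘ tensm (idm unitE) f = f ∘ lun a;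
  run : forall a, hom (tens a unitE) a;
  run_inv : forall a, hom a (tens a unitE);
  run_iso1 : forall a, run_inv a ∘ run a = idm _;
  run_iso2 : forall a, run a ∘ run_inv a = idm _;
  run_nat : forall a b (f : hom a b), run b ∘ tensm f (idm unitE) = f ∘ run a;
  pentagon : forall a b c d,
      asc a b (tens c d) ∘ asc (tens a b) c d
      = tensm (idm a) (asc b c d) ∘ asc a (tens b c) d ∘ tensm (asc a b c) (idm d);
  triangle : forall a b,
      tensm (idm a) (lun b) ∘ asc a unitE b = tensm (run a) (idm b);
  braid : forall a b, hom (tens a b) (tens b a);
  braid_nat : forall a a' b b' (f : hom a a') (g : hom b b'),
      braid a' b' ∘ tensm f g = tensm g f ∘ braid a b;
  braid_sym : forall a b, braid b a ∘ braid a b = idm (tens a b);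
  hexagon : forall a b c,
      asc b c a ∘ braid a (tens b c) ∘ asc a b c
      = tensm (idm b) (braid a c) ∘ asc b a c ∘ tensm (braid a b) (idm c) }.

Arguments tens {_} _ _.
Arguments tensm {_ _ _ _ _} _ _.
Arguments unitE {_}.
Arguments braid {_} _ _.

(** * Bimodule categories over a symmetric monoidal category
    (left action e ⊙ x, right action x ⊙ e, with associativity isomorphisms
     aL : (e⊗e')⊙x -> e⊙(e'⊙x), aR : x⊙(e⊗e') -> (x⊙e)⊙e',
     aM : (e⊙x)⊙e' -> e⊙(x⊙e'), and unit isomorphisms). *)
Record BiModCat (E : SymMonCat) := {
  bmc :> Cat;
  lact : E -> bmc -> bmc;
  lactm : forall (e e' : E) (x y : bmc), hom e e' -> hom x y -> hom (lact e x) (lact e' y);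
  lactm_id : forall (e : E) (x : bmc), lactm (idm e) (idm x) = idm (lact e x);
  lactm_comp : forall (e1 e2 e3 : E) (x1 x2 x3 : bmc) (f : hom e1 e2) (f' : hom e2 e3)
      (g : hom x1 x2) (g' : hom x2 x3),
      lactm (f' ∘ f) (g' ∘ g) = lactm f' g' ∘ lactm f g;
  ract : bmc -> E -> bmc;
  ractm : forall (x y : bmc) (e e' : E), hom x y -> hom e e' -> hom (ract x e) (ract y e');
  ractm_id : forall (x : bmc) (e : E), ractm (idm x) (idm e) = idm (ract x e);
  ractm_comp : forall (x1 x2 x3 : bmc) (e1 e2 e3 : E) (g : hom x1 x2) (g' : hom x2 x3)
      (f : hom e1 e2) (f' : hom e2 e3),
      ractm (g' ∘ g) (f' ∘ f) = ractm g' f' ∘ ractm g f;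
  aL : forall (e e' : E) (x : bmc), hom (lact (tens e e') x) (lact e (lact e' x));
  aL_inv : forall (e e' : E) (x : bmc), hom (lact e (lact e' x)) (lact (tens e e') x);
  aL_iso1 : forall e e' x, aL_inv e e' x ∘ aL e e' x = idm _;
  aL_iso2 : forall e e' x, aL e e' x ∘ aL_inv e e' x = idm _;
  aL_nat : forall (e1 e2 e1' e2' : E) (x y : bmc) (f : hom e1 e2) (f' : hom e1' e2') (g : hom x y),
      aL e2 e2' y ∘ lactm (tensm f f') g = lactm f (lactm f' g) ∘ aL e1 e1' x;
  aR : forall (x : bmc) (e e' : E), hom (ract x (tens e e')) (ract (ract x e) e');
  aR_inv : forall (x : bmc) (e e' : E), hom (ract (ract x e) e') (ract x (tens e e'));
  aR_iso1 : forall x e e', aR_inv x e e' ∘ aR x e e' = idm _;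
  aR_iso2 : forall x e e', aR x e e' ∘ aR_inv x e e' = idm _;
  aR_nat : forall (x y : bmc) (e1 e2 e1' e2' : E) (g : hom x y) (f : hom e1 e2) (f' : hom e1' e2'),
      aR y e2 e2' ∘ ractm g (tensm f f') = ractm (ractm g f) f' ∘ aR x e1 e1';
  aM : forall (e : E) (x : bmc) (e' : E), hom (ract (lact e x) e') (lact e (ract x e'));
  aM_inv : forall (e : E) (x : bmc) (e' : E), hom (lact e (ract x e')) (ract (lact e x) e');
  aM_iso1 : forall e x e', aM_inv e x e' ∘ aM e x e' = idm _;
  aM_iso2 : forall e x e', aM e x e' ∘ aM_inv e x e' = idm _;
  aM_nat : forall (e1 e2 : E) (x y : bmc) (e1' e2' : E) (f : hom e1 e2) (g : hom x y) (f' : hom e1' e2'),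
      aM e2 y e2' ∘ ractm (lactm f g) f' = lactm f (ractm g f') ∘ aM e1 x e1';
  lunC : forall (x : bmc), hom (lact unitE x) x;
  lunC_inv : forall (x : bmc), hom x (lact unitE x);
  lunC_iso1 : forall x, lunC_inv x ∘ lunC x = idm _;
  lunC_iso2 : forall x, lunC x ∘ lunC_inv x = idm _;
  lunC_nat : forall (x y : bmc) (g : hom x y), lunC y ∘ lactm (idm unitE) g = g ∘ lunC x;
  runC : forall (x : bmc), hom (ract x unitE) x;
  runC_inv : forall (x : bmc), hom x (ract x unitE);
  runC_iso1 : forall x, runC_inv x ∘ runC x = idm _;
  runC_iso2 : forall x, runC x ∘ runC_inv x = idm _;
  runC_nat : forall (x y : bmc) (g : hom x y), runC y ∘ ractm g (idm unitE) = g ∘ runC x }.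

Arguments lact {_ _} _ _.
Arguments lactm {_ _ _ _ _ _} _ _.
Arguments ract {_ _} _ _.
Arguments ractm {_ _ _ _ _ _} _ _.
Arguments aL {_ _} _ _ _.
Arguments aL_inv {_ _} _ _ _.
Arguments aR {_ _} _ _ _.
Arguments aR_inv {_ _} _ _ _.
Arguments aM {_ _} _ _ _.
Arguments aM_inv {_ _} _ _ _.

(** * E-module braidings, with the suppressed associativity isomorphisms
    of axioms (a)-(d) reinstated. *)
Record ModBraiding (E : SymMonCat) (C : BiModCat E) := {
  tau1 : forall (e : E) (x : C), hom (lact e x) (ract x e);
  tau1_inv : forall (e : E) (x : C), hom (ract x e) (lact e x);
  tau1_iso1 : forall e x, tau1_inv e x ∘ tau1 e x = idm _;
  tau1_iso2 : forall e x, tau1 e x ∘ tau1_inv e x = idm _;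
  tau1_nat : forall (e e' : E) (x y : C) (f : hom e e') (g : hom x y),
      tau1 e' y ∘ lactm f g = ractm g f ∘ tau1 e x;
  tau2 : forall (x : C) (e : E), hom (ract x e) (lact e x);
  tau2_inv : forall (x : C) (e : E), hom (lact e x) (ract x e);
  tau2_iso1 : forall x e, tau2_inv x e ∘ tau2 x e = idm _;
  tau2_iso2 : forall x e, tau2 x e ∘ tau2_inv x e = idm _;
  tau2_nat : forall (x y : C) (e e' : E) (g : hom x y) (f : hom e e'),
      tau2 y e' ∘ ractm g f = lactm f g ∘ tau2 x e;
  tau_unit : forall x : C, tau2 x unitE ∘ tau1 unitE x = idm (lact unitE x);
  (* (a) tau1_{e, e'⊙x} = (1_{e'} ⊙ tau1_{e,x}) ∘ (r_{e,e'} ⊙ 1_x) *)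
  ax_a : forall (e e' : E) (x : C),
      tau1 e (lact e' x)
      = aM_inv e' x e ∘ lactm (idm e') (tau1 e x) ∘ aL e' e x
        ∘ lactm (braid e e') (idm x) ∘ aL_inv e e' x;
  (* (b) tau2_{e'⊙x, e} = (r_{e',e} ⊙ 1_x) ∘ (1_{e'} ⊙ tau2_{x,e}) *)
  ax_b : forall (e e' : E) (x : C),
      tau2 (lact e' x) e
      = aL e e' x ∘ lactm (braid e' e) (idm x) ∘ aL_inv e' e x
        ∘ lactm (idm e') (tau2 x e) ∘ aM e' x e;
  (* (c) tau1_{e⊗e', x} = (tau1_{e,x} ⊙ 1_{e'}) ∘ (1_e ⊙ tau1_{e',x}) *)
  ax_c : forall (e e' : E) (x : C),
      tau1 (tens e e') x
      = aR_inv x e e' ∘ ractm (tau1 e x) (idm e') ∘ aM_inv e x e'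
        ∘ lactm (idm e) (tau1 e' x) ∘ aL e e' x;
  (* (d) tau2_{x, e⊗e'} = (1_e ⊙ tau2_{x,e'}) ∘ (tau2_{x,e} ⊙ 1_{e'}) *)
  ax_d : forall (e e' : E) (x : C),
      tau2 x (tens e e')
      = aL_inv e e' x ∘ lactm (idm e) (tau2 x e') ∘ aM e x e'
        ∘ ractm (tau2 x e) (idm e') ∘ aR x e e' }.

Arguments tau1 {_ _} _ _ _.
Arguments tau2 {_ _} _ _ _.

Definition tau {E : SymMonCat} {C : BiModCat E} (B : ModBraiding C) (e : E) (x : C)
  : hom (lact e x) (lact e x) := tau2 B x e ∘ tau1 B e x.


(* Axioms (a) and (b) say that tau on e' ⊙ x is the conjugate of 1 ⊙ tau_{e,x}
   by r_{e,e'} ⊙ 1 (transported along the associators), an involution because r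
   is symmetric; this gives (1).  Axioms (c) and (d) write tau_{e⊗e',x} as
   (1 ⊙ tau2_{x,e'}) (tau_{e,x} ⊙ 1) (1 ⊙ tau1_{e',x}) up to associators.
   Read backwards, (a) and (b) for the pair (e', e) turn the outer factors into
   tau1_{e',e⊙x} and tau2_{e⊙x,e'} up to the involution; naturality of tau2
   moves tau_{e,x} to the left, and the conjugation formula for tau_{e',e⊙x}
   then yields tau_{e,e'⊙x} (1 ⊙ tau_{e',x}). *)

Section CategoryRewriting.
Context {C : Cat}.

Lemma comp_eq_l {a b c : C} {f : hom a b} {g : hom b c} {h : hom a c} :
  g ∘ f = h -> forall d (k : hom c d), k ∘ g ∘ f = k ∘ h.
Proof. intros H d k. rewrite <- comp_assoc, H. reflexivity. Qed.

Lemma comp_inv_l_eq {a b c : C} {f : hom a b} {g : hom b a} {h : hom c b} {k : hom c a} :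
  g ∘ f = idm a -> h = f ∘ k -> g ∘ h = k.
Proof. intros Hgf ->. rewrite comp_assoc, Hgf, comp_id_l. reflexivity. Qed.

Lemma comp_inv_r_eq {a b c : C} {f : hom a b} {g : hom b a} {h : hom a c} {k : hom b c} :
  f ∘ g = idm b -> h = k ∘ f -> h ∘ g = k.
Proof. intros Hfg ->. rewrite <- comp_assoc, Hfg, comp_id_r. reflexivity. Qed.

End CategoryRewriting.

(* Composites are kept left-associated, so that a two-factor redex [g ∘ f]
   occurs either as a subterm or as [k ∘ g ∘ f]. *)
Ltac assoc_l := repeat rewrite comp_assoc.
Ltac rewrite_assoc H :=
  assoc_l; first [rewrite (comp_eq_l H) | rewrite H]; assoc_l.

Section ActionBraiding.
Context {E : SymMonCat} {C : BiModCat E}.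

Lemma lactm_id_comp (e : E) {x y z : C} (f : hom x y) (g : hom y z) :
  lactm (idm e) g ∘ lactm (idm e) f = lactm (idm e) (g ∘ f).
Proof. rewrite <- lactm_comp, comp_id_l. reflexivity. Qed.

Lemma ractm_comp_id (e : E) {x y z : C} (f : hom x y) (g : hom y z) :
  ractm g (idm e) ∘ ractm f (idm e) = ractm (g ∘ f) (idm e).
Proof. rewrite <- ractm_comp, comp_id_l. reflexivity. Qed.

Definition lact_braid (e e' : E) (x : C) : hom (lact e (lact e' x)) (lact e' (lact e x)) :=
  aL e' e x ∘ lactm (braid e e') (idm x) ∘ aL_inv e e' x.

Lemma lact_braid_sym (e e' : E) (x : C) :
  lact_braid e' e x ∘ lact_braid e e' x = idm _.
Proof.
  unfold lact_braid. assoc_l.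
  rewrite_assoc (aL_iso1 e' e x). rewrite comp_id_r.
  rewrite_assoc (eq_sym (lactm_comp (braid e e') (braid e' e) (idm x) (idm x))).
  rewrite braid_sym, comp_id_l, lactm_id, comp_id_r. apply aL_iso2.
Qed.

End ActionBraiding.

Section ModuleBraiding.
Context {E : SymMonCat} {C : BiModCat E} (B : ModBraiding C).

Lemma tau1_lact (e e' : E) (x : C) :
  tau1 B e (lact e' x)
  = aM_inv e' x e ∘ lactm (idm e') (tau1 B e x) ∘ lact_braid e e' x.
Proof. rewrite (ax_a B). unfold lact_braid. assoc_l. reflexivity. Qed.

Lemma tau2_lact (e e' : E) (x : C) :
  tau2 B (lact e' x) e
  = lact_braid e' e x ∘ lactm (idm e') (tau2 B x e) ∘ aM e' x e.
Proof. rewrite (ax_b B). reflexivity. Qed.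

Lemma tau_lact (e e' : E) (x : C) :
  tau B e (lact e' x)
  = lact_braid e' e x ∘ lactm (idm e') (tau B e x) ∘ lact_braid e e' x.
Proof.
  unfold tau. rewrite tau1_lact, tau2_lact. assoc_l.
  rewrite_assoc (aM_iso2 e' x e). rewrite comp_id_r.
  rewrite_assoc (lactm_id_comp e' (tau1 B e x) (tau2 B x e)). reflexivity.
Qed.

Lemma lact_braid_tau (e e' : E) (x : C) :
  lact_braid e e' x ∘ tau B e (lact e' x)
  = lactm (idm e') (tau B e x) ∘ lact_braid e e' x.
Proof.
  apply (comp_inv_l_eq (lact_braid_sym e' e x)).
  rewrite tau_lact. assoc_l. reflexivity.
Qed.

Lemma lactm_tau2_aM (e e' : E) (x : C) :
  lactm (idm e) (tau2 B x e') ∘ aM e x e' = lact_braid e' e x ∘ tau2 B (lact e x) e'.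
Proof.
  symmetry. apply (comp_inv_l_eq (lact_braid_sym e e' x)).
  rewrite tau2_lact. assoc_l. reflexivity.
Qed.

Lemma aM_inv_lactm_tau1 (e e' : E) (x : C) :
  aM_inv e x e' ∘ lactm (idm e) (tau1 B e' x) = tau1 B e' (lact e x) ∘ lact_braid e e' x.
Proof.
  symmetry. apply (comp_inv_r_eq (lact_braid_sym e e' x)). apply tau1_lact.
Qed.

Lemma tau_tens (e e' : E) (x : C) :
  aL e e' x ∘ tau B (tens e e') x ∘ aL_inv e e' x
  = lactm (idm e) (tau2 B x e') ∘ aM e x e' ∘ ractm (tau B e x) (idm e')
    ∘ aM_inv e x e' ∘ lactm (idm e) (tau1 B e' x).
Proof.
  unfold tau. rewrite (ax_c B), (ax_d B). assoc_l.
  rewrite (aL_iso2 e e' x), comp_id_l.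
  rewrite_assoc (aR_iso2 x e e'). rewrite comp_id_r.
  rewrite_assoc (aL_iso2 e e' x). rewrite comp_id_r.
  rewrite_assoc (ractm_comp_id e' (tau1 B e x) (tau2 B x e)). reflexivity.
Qed.

Lemma tau_tens_lact (e e' : E) (x : C) :
  aL e e' x ∘ tau B (tens e e') x ∘ aL_inv e e' x
  = tau B e (lact e' x) ∘ lactm (idm e) (tau B e' x).
Proof.
  rewrite tau_tens, lactm_tau2_aM. assoc_l.
  rewrite_assoc (aM_inv_lactm_tau1 e e' x).
  rewrite_assoc (tau2_nat B (tau B e x) (idm e')).
  rewrite <- (comp_assoc (tau1 B e' (lact e x))). fold (tau B e' (lact e x)).
  rewrite (tau_lact e' e x). rewrite_assoc (eq_sym (tau_lact e e' x)).
  rewrite_assoc (lact_braid_sym e e' x). rewrite comp_id_r. reflexivity.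
Qed.

End ModuleBraiding.

Theorem proposition2p5 (E : SymMonCat) (C : BiModCat E) (B : ModBraiding C) :
  forall (e e' : E) (x : C),
    (* (1): (r_{e,e'} ⊙ 1_x) ∘ tau_{e, e'⊙x} = (1_{e'} ⊙ tau_{e,x}) ∘ (r_{e,e'} ⊙ 1_x) *)
    aL e' e x ∘ lactm (braid e e') (idm x) ∘ aL_inv e e' x ∘ tau B e (lact e' x)
    = lactm (idm e') (tau B e x) ∘ aL e' e x ∘ lactm (braid e e') (idm x) ∘ aL_inv e e' x
    /\
    (* (2): tau_{e⊗e', x} = tau_{e, e'⊙x} ∘ (1_e ⊙ tau_{e',x}) *)
    aL e e' x ∘ tau B (tens e e') x ∘ aL_inv e e' x
    = tau B e (lact e' x) ∘ lactm (idm e) (tau B e' x).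
Proof.
  intros e e' x. split.
  - transitivity (lactm (idm e') (tau B e x) ∘ lact_braid e e' x).
    + apply lact_braid_tau.
    + unfold lact_braid. assoc_l. reflexivity.
  - apply tau_tens_lact.
Qed.
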